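(* For all integers $2\le k\le n$, \[ \mathbb{P}_n(W_k\cap W_{k-1})=\frac{k}{n}-\frac{3}{2n}+\frac{(n-k+1)^2}{4n(n-1)}, \] i.e. this is the probability that both the $(k-1)$-th and $k$-th boundary steps of a uniformly random type-B permutation tableau of size $n$ are west steps.
   Context: A Ferrers diagram is a left-justified array of cells whose row lengths weakly decrease from top to bottom (rows of length $0$ are allowed). Its half-perimeter is the number of rows plus the number of columns. Its southeast boundary, traversed from the northeast corner to the southwest corner, consists of $n$ unit steps, each south or west; south steps correspond to rows and west steps to columns. We write $S_k$ (resp. $W_k$) for the event that the $k$-th step is south (resp. west). If the diagram has $c$ columns, the shifted Ferrers diagram is obtained by inserting $c$ new left-justified rows above it, of lengths $c,c-1,\dots,1$ from top to bottom; the rightmost cell of each inserted row is a diagonal cell. A type-B permutation tableau of size $n$ is a filling of a shifted Ferrers diagram of half-perimeter $n$ with $0$'s and $1$'s such that: (1) every column contains at least one $1$; (2) no $0$ has both a $1$ above it in its column and a $1$ to its left in its row; (3) if a diagonal cell contains $0$ then every cell of its row contains $0$. The boundary steps of the shifted diagram are those of the underlying Ferrers diagram. Let $\mathcal{B}_n$ be the set of such tableaux and $\mathbb{P}_n$ the uniform probability measure on $\mathcal{B}_n$. *)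

From mathcomp Require Import all_boot all_order all_algebra.
Set Implicit Arguments.
Unset Strict Implicit.
Unset Printing Implicit Defensive.
Import GRing.Theory Num.Theory.

(* Boundary word: w : seq bool, read from the NE corner to the SW corner;
   step i (0-based) is SOUTH iff  nth false w i = true, WEST iff false. *)

Definition ncols (w : seq bool) : nat := count negb w.

(* 0-based positions of the south steps (= rows of the Ferrers diagram,
   top to bottom) *)
Definition southpos (w : seq bool) : seq nat :=
  [seq i <- iota 0 (size w) | nth false w i].

(* Rows of the shifted diagram, indexed top to bottom by r = 0,1,...
   rows r < c (c = ncols w) are the inserted staircase rows; the row
   r = c + s is the s-th row of the underlying Ferrers diagram, whose
   length is the number of west steps after the corresponding south step.
   Staircase row r has length r+1 and its rightmost cell (column r) is its
   diagonal cell. Columns are 0-based from the left. *)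
Definition rowlen (w : seq bool) (r : nat) : nat :=
  let c := ncols w in
  if r < c then r.+1
  else if r - c < size (southpos w)
       then count negb (drop (nth 0 (southpos w) (r - c)).+1 w)
       else 0.

Definition inD (w : seq bool) (r j : nat) : bool := j < rowlen w r.

Definition isdiag (w : seq bool) (r j : nat) : bool := (r < ncols w) && (j == r).

(* A candidate tableau of size n: boundary word (n steps) and a 0/1 filling
   of 'I_n * 'I_n (true = 1); the shifted diagram has n rows and at most
   n columns, so it fits in 'I_n * 'I_n. *)
Definition cand (n : nat) := (n.-tuple bool * {ffun 'I_n * 'I_n -> bool})%type.

Definition is_typeB (n : nat) (t : cand n) : bool :=
  let w := tval t.1 in
  let f := t.2 in
  [&&
      [forall r : 'I_n, forall j : 'I_n, f (r, j) ==> inD w r j],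
      [forall j : 'I_n, (j < ncols w) ==> [exists r : 'I_n, inD w r j && f (r, j)]],
      [forall r : 'I_n, forall j : 'I_n,
         (inD w r j && ~~ f (r, j)) ==>
         ~~ ([exists r' : 'I_n, [&& r' < r, inD w r' j & f (r', j)]] &&
             [exists j' : 'I_n, [&& j' < j, inD w r j' & f (r, j')]])]
    &
      [forall r : 'I_n, forall j : 'I_n,
         (isdiag w r j && ~~ f (r, j)) ==>
         [forall j' : 'I_n, inD w r j' ==> ~~ f (r, j')]]].

Definition typeB (n : nat) : {set cand n} := [set t | is_typeB t].

Definition Pn (n : nat) (E : {set cand n}) : rat :=
  (#|E :&: typeB n|)%:R / (#|typeB n|)%:R.

Definition W (n k : nat) : {set cand n} :=
  [set t : cand n | ~~ nth false (tval t.1) k.-1].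

(* Tableaux are grown by appending boundary steps at the south-west end.  Call
   a row of a filling *restricted* when no 1 may be placed to the left of all
   its cells (it has a 0 below a 1 of its column, or it is a staircase row with
   a 0 on the diagonal), and let G_w(t) = sum over the type-B fillings of the
   boundary word w of t ^ (number of unrestricted rows).
   - A south step adds an empty free row:        G_{wS}(t) = t G_w(t).
   - A west step adds a new leftmost column and a new staircase row; summing
     over the admissible new columns (new_column_sum) gives
                                          G_{wW}(t) + t G_w(t) = 2t G_w(t+1).
   Hence sum_{|w| = n} G_w(t) = 2^n t(t+1)...(t+n-1) and |B_n| = 2^n n!.  For
   the event, steps after position k are free and shift t, while the words of
   length k ending in WW are handled by applying the west recursion twice; this
   yields 2^(n-2) (n-2)! ((n-k+1)^2 + 2(n-1)(2k-3)) tableaux, and the theorem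
   follows by dividing. *)

From mathcomp Require Import all_boot all_order all_algebra zify ring.
From Stdlib Require Import FunctionalExtensionality.
Import GRing.Theory Num.Theory.
Set Implicit Arguments.
Unset Strict Implicit.
Unset Printing Implicit Defensive.

(** * Boundary words under appending a step at the south-west end *)

Lemma ncols_rcons w b : ncols (rcons w b) = ncols w + ~~ b.
Proof. by rewrite /ncols -cats1 count_cat /= addn0. Qed.

Lemma southpos_rcons w b : southpos (rcons w b) =
  if b then rcons (southpos w) (size w) else southpos w.
Proof.
rewrite /southpos size_rcons -addn1 iotaD add0n /= filter_cat /= nth_rcons ltnn eqxx.
have -> : [seq i <- iota 0 (size w) | nth false (rcons w b) i] =
          [seq i <- iota 0 (size w) | nth false w i].
  by apply: eq_in_filter => i; rewrite mem_iota add0n /= => hi; rewrite nth_rcons hi.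
by case: b; rewrite ?cats1 ?cats0.
Qed.

Lemma mem_southpos_lt w i : i \in southpos w -> i < size w.
Proof. by rewrite mem_filter mem_iota => /andP[_ /andP[_]]. Qed.

Lemma size_southpos w : size (southpos w) + ncols w = size w.
Proof.
elim/last_ind: w => [//|w b IH].
by rewrite southpos_rcons ncols_rcons size_rcons; case: b; rewrite ?size_rcons /=; lia.
Qed.

Lemma ncols_le_size w : ncols w <= size w.
Proof. exact: count_size. Qed.

Lemma rowlen_rcons_south w r : rowlen (rcons w true) r = rowlen w r.
Proof.
rewrite /rowlen ncols_rcons addn0 southpos_rcons size_rcons.
case: ifP => // _; set i := r - ncols w; rewrite nth_rcons.
case: (ltnP i (size (southpos w))) => hi.
  rewrite ltnS ltnW //=.
  have hp : nth 0 (southpos w) i < size w by apply/mem_southpos_lt/mem_nth.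
  by rewrite (drop_rcons hp) -cats1 count_cat /= !addn0.
case: ifP => // hi2; have -> : i = size (southpos w) by lia.
by rewrite eqxx drop_oversize // size_rcons.
Qed.

Lemma rowlen_rcons_west0 w : rowlen (rcons w false) 0 = 1.
Proof. by rewrite /rowlen ncols_rcons addn1. Qed.

Lemma rowlen_rcons_westS w r : rowlen (rcons w false) r.+1 =
  if r < size w then (rowlen w r).+1 else 0.
Proof.
rewrite /rowlen ncols_rcons addn1 ltnS southpos_rcons subSS.
have hs := size_southpos w.
have hc := ncols_le_size w.
case: (ltnP r (ncols w)) => hr; first by have -> : r < size w by lia.
case: (ltnP (r - ncols w) (size (southpos w))) => hi; last by have -> : r < size w = false by lia.
have -> : r < size w by lia.
have hp : nth 0 (southpos w) (r - ncols w) < size w by apply/mem_southpos_lt/mem_nth.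
by rewrite drop_rcons // -cats1 count_cat /= addn0 addn1.
Qed.

Lemma rowlen_le w r : rowlen w r <= maxn r.+1 (ncols w).
Proof.
rewrite /rowlen; case: ifP => h; first by rewrite leq_maxl.
case: ifP => _ //; apply: leq_trans (leq_maxr _ _).
set k := (nth 0 (southpos w) (r - ncols w)).+1.
by rewrite /ncols -[in X in _ <= X](cat_take_drop k w) count_cat leq_addl.
Qed.

(* A word of length n gives at most n rows (c staircase rows, n - c others). *)
Lemma rowlen_out w r : size w <= r -> rowlen w r = 0.
Proof. by move=> h; have hs := size_southpos w; rewrite /rowlen ifF ?ifF //; lia. Qed.

Lemma inD_lt_size w r j : inD w r j -> r < size w /\ j < size w.
Proof.
rewrite /inD => h; case: (ltnP r (size w)) => hr; last by rewrite rowlen_out in h.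
by split => //; have := rowlen_le w r; have := ncols_le_size w; lia.
Qed.

Lemma inD_rcons_south w : inD (rcons w true) = inD w.
Proof.
do 2 apply: functional_extensionality => ?.
by rewrite /inD rowlen_rcons_south.
Qed.

Lemma inD_rcons_west_row0 w j : inD (rcons w false) 0 j = (j == 0).
Proof. by rewrite /inD rowlen_rcons_west0; case: j. Qed.

Lemma inD_rcons_west_col0 w r : inD (rcons w false) r 0 = (r <= size w).
Proof. by case: r => [|r]; rewrite /inD ?rowlen_rcons_west0 ?rowlen_rcons_westS //; case: ifP. Qed.

Lemma inD_rcons_westSS w r j : inD (rcons w false) r.+1 j.+1 = inD w r j.
Proof.
rewrite /inD rowlen_rcons_westS; case: ifP => h; first by rewrite ltnS.
by rewrite rowlen_out // leqNgt h.
Qed.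

(** * Fillings as functions on pairs of naturals *)

(* A filling of the n x n square read as a function on nat x nat, false
   outside the square; this lets the recursion shift rows and columns freely. *)
Definition cell n (f : {ffun 'I_n * 'I_n -> bool}) (r j : nat) : bool :=
  if insub r is Some r' then (if insub j is Some j' then f (r', j') else false)
  else false.

Definition filling_of n (g : nat -> nat -> bool) : {ffun 'I_n * 'I_n -> bool} :=
  [ffun p => g (val p.1) (val p.2)].

Lemma cellE n f (r j : 'I_n) : cell f r j = f (r, j).
Proof. by rewrite /cell !valK. Qed.

Lemma cell_out n f r j : ~~ ((r < n) && (j < n)) -> @cell n f r j = false.
Proof.
rewrite negb_and /cell => /orP[h|h]; first by rewrite insubF //; apply/negbTE.
by case: insub => // a; rewrite insubF //; apply/negbTE.
Qed.

Lemma cell_filling_of n (g : nat -> nat -> bool) r j :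
  cell (filling_of n g) r j = [&& r < n, j < n & g r j].
Proof.
case: (boolP ((r < n) && (j < n))) => [/andP[hr hj]|hn].
  by rewrite -[r]/(val (Ordinal hr)) -[j]/(val (Ordinal hj)) cellE ffunE /= hr hj.
by rewrite cell_out //; move: hn; case: (r < n); case: (j < n).
Qed.

Lemma cell_filling_ofK n (g : nat -> nat -> bool) : (forall r j, g r j -> r < n /\ j < n) ->
  cell (filling_of n g) = g.
Proof.
move=> supp; do 2 apply: functional_extensionality => ?.
rewrite cell_filling_of; case: (boolP (g _ _)) => [/supp[-> ->] //|]; by rewrite !andbF.
Qed.

Lemma cell_supp n f r j : @cell n f r j -> r < n /\ j < n.
Proof. by move=> h; apply/andP; apply: contraTT h => /cell_out ->. Qed.

Lemma cell_inj n : injective (@cell n).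
Proof. by move=> f f' h; apply/ffunP => -[r j]; rewrite -!cellE h. Qed.

(** * Validity of a filling *)

Definition typeB_filling n (w : seq bool) (f : {ffun 'I_n * 'I_n -> bool}) : bool :=
  [&& [forall r : 'I_n, forall j : 'I_n, f (r, j) ==> inD w r j],
      [forall j : 'I_n, (j < ncols w) ==> [exists r : 'I_n, inD w r j && f (r, j)]],
      [forall r : 'I_n, forall j : 'I_n,
         (inD w r j && ~~ f (r, j)) ==>
         ~~ ([exists r' : 'I_n, [&& r' < r, inD w r' j & f (r', j)]] &&
             [exists j' : 'I_n, [&& j' < j, inD w r j' & f (r, j')]])]
    & [forall r : 'I_n, forall j : 'I_n,
         (isdiag w r j && ~~ f (r, j)) ==>
         [forall j' : 'I_n, inD w r j' ==> ~~ f (r, j')]]].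

Lemma is_typeB_filling n (t : cand n) : is_typeB t = typeB_filling (tval t.1) t.2.
Proof. by []. Qed.

Definition valid (w : seq bool) (g : nat -> nat -> bool) : Prop :=
  [/\ (forall r j, g r j -> inD w r j),
      (forall j, j < ncols w -> exists r, inD w r j && g r j),
      (forall r j, inD w r j -> ~~ g r j ->
          (exists r', [&& r' < r, inD w r' j & g r' j]) ->
          (exists j', [&& j' < j, inD w r j' & g r j']) -> False)
    & (forall r, r < ncols w -> ~~ g r r -> forall j, ~~ g r j)].

Lemma valid_inD w g : valid w g -> forall r j, g r j -> inD w r j.
Proof. by case. Qed.

Section FillingValidity.
Variables (n : nat) (w : seq bool) (f : {ffun 'I_n * 'I_n -> bool}).
Hypothesis size_w : size w = n.

Lemma valid_of_typeB_filling : typeB_filling w f -> valid w (cell f).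
Proof.
case/and4P => /forallP h1 /forallP h2 /forallP h3 /forallP h4; split.
- move=> r j hg; have [hr hj] := cell_supp hg; move: hg.
  rewrite -[r]/(val (Ordinal hr)) -[j]/(val (Ordinal hj)) cellE.
  by move/forallP: (h1 (Ordinal hr)) => /(_ (Ordinal hj)) /implyP.
- move=> j hj; have hjn : j < n by rewrite -size_w; apply: leq_trans hj (ncols_le_size w).
  move/implyP: (h2 (Ordinal hjn)) => /(_ hj) /existsP[r /andP[a b]].
  by exists r; rewrite a -[j]/(val (Ordinal hjn)) cellE.
- move=> r j hin hg [r' /and3P[hr' hin' hg']] [j' /and3P[hj' hinj' hgj']].
  have [hr hj] := inD_lt_size hin; rewrite size_w in hr hj.
  have hr'n : r' < n by apply: ltn_trans hr.
  have hj'n : j' < n by apply: ltn_trans hj.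
  move: hg hg' hgj'; rewrite -[r]/(val (Ordinal hr)) -[j]/(val (Ordinal hj)).
  rewrite -[r']/(val (Ordinal hr'n)) -[j']/(val (Ordinal hj'n)) !cellE => hg hg' hgj'.
  move/forallP: (h3 (Ordinal hr)) => /(_ (Ordinal hj)) /implyP.
  rewrite hin hg => /(_ isT) /negP; apply; apply/andP; split.
    by apply/existsP; exists (Ordinal hr'n); rewrite /= hr' hin'.
  by apply/existsP; exists (Ordinal hj'n); rewrite /= hj' hinj'.
- move=> r hr hg j; apply/negP => hf; have [hrn hj] := cell_supp hf; move: hf.
  move: hg; rewrite -[r]/(val (Ordinal hrn)) -[j]/(val (Ordinal hj)) !cellE => hg hf.
  move/forallP: (h4 (Ordinal hrn)) => /(_ (Ordinal hrn)) /implyP.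
  rewrite /isdiag /= hr eqxx hg => /(_ isT) /forallP /(_ (Ordinal hj)) /implyP.
  have hin : inD w r j by move/forallP: (h1 (Ordinal hrn)) => /(_ (Ordinal hj)) /implyP; apply.
  by move/(_ hin); rewrite hf.
Qed.

Lemma typeB_filling_of_valid : valid w (cell f) -> typeB_filling w f.
Proof.
case=> h1 h2 h3 h4; apply/and4P; split.
- by apply/forallP => r; apply/forallP => j; apply/implyP => hf; apply: h1; rewrite cellE.
- apply/forallP => j; apply/implyP => /h2[r /andP[a b]].
  have [hr _] := inD_lt_size a; rewrite size_w in hr.
  apply/existsP; exists (Ordinal hr); rewrite a /=.
  by rewrite -[r]/(val (Ordinal hr)) cellE in b.
- apply/forallP => r; apply/forallP => j; apply/implyP => /andP[hin hg].
  apply/negP => /andP[/existsP[r' /and3P[a b c]] /existsP[j' /and3P[d e g]]].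
  apply: (h3 r j hin); first by rewrite cellE.
    by exists r'; rewrite a b cellE.
  by exists j'; rewrite d e cellE.
- apply/forallP => r; apply/forallP => j; apply/implyP => /andP[/andP[hr /eqP hjr] hg].
  apply/forallP => j'; apply/implyP => _; rewrite -cellE; apply: h4 => //.
  by move: hg; rewrite -cellE hjr.
Qed.

Lemma typeB_fillingP : typeB_filling w f <-> valid w (cell f).
Proof. by split; [apply: valid_of_typeB_filling | apply: typeB_filling_of_valid]. Qed.

End FillingValidity.

(** * Restricted rows and the effect of one step on a filling *)

Lemma iota0S n : iota 0 n.+1 = 0 :: map succn (iota 0 n).
Proof. by rewrite /= -[1]/(1 + 0) iotaDl. Qed.

Lemma has_iota0S (p : pred nat) n :
  has p (iota 0 n.+1) = p 0 || has (fun i => p i.+1) (iota 0 n).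
Proof. by rewrite iota0S /= has_map. Qed.

Lemma all_iota0S (p : pred nat) n :
  all p (iota 0 n.+1) = p 0 && all (fun i => p i.+1) (iota 0 n).
Proof. by rewrite iota0S /= all_map. Qed.

Lemma count_iota0S (p : pred nat) n :
  count p (iota 0 n.+1) = p 0 + count (fun i => p i.+1) (iota 0 n).
Proof. by rewrite iota0S /= count_map. Qed.

(* Row r is restricted when no 1 may be put to the left of all its cells: it
   has a 0 below a 1 of its column, or it is a staircase row whose diagonal
   cell is 0.  Only the unrestricted rows can receive a 1 in a new column. *)
Definition restricted n w (g : nat -> nat -> bool) r : bool :=
  has (fun j => [&& inD w r j, ~~ g r j & has (fun r' => inD w r' j && g r' j) (iota 0 r)])
      (iota 0 n)
  || (r < ncols w) && ~~ g r r.

Definition free_rows n w g : nat := count (fun r => ~~ restricted n w g r) (iota 0 n).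

Lemma restrictedI w g r j r' : inD w r j -> ~~ g r j -> r' < r ->
   inD w r' j -> g r' j -> restricted (size w) w g r.
Proof.
move=> a b c d e; have [_ hj] := inD_lt_size a.
apply/orP; left; apply/hasP; exists j; first by rewrite mem_iota.
by rewrite a b /=; apply/hasP; exists r'; rewrite ?mem_iota ?d.
Qed.

Lemma restrictedE w g r : restricted (size w) w g r ->
  (exists j r', [/\ inD w r j, ~~ g r j, r' < r, inD w r' j & g r' j])
  \/ (r < ncols w /\ ~~ g r r).
Proof.
case/orP => [/hasP[j _ /and3P[a b /hasP[r' hr' /andP[c d]]]]|/andP[a b]]; last by right.
by left; exists j, r'; split => //; move: hr'; rewrite mem_iota.
Qed.

Lemma valid_rcons_south w g : valid (rcons w true) g <-> valid w g.
Proof. by rewrite /valid inD_rcons_south ncols_rcons addn0. Qed.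

Lemma free_rows_rcons_south w g :
  free_rows (size w).+1 (rcons w true) g = (free_rows (size w) w g).+1.
Proof.
rewrite /free_rows /restricted inD_rcons_south ncols_rcons addn0 -addn1 iotaD add0n.
rewrite count_cat /= addn0 -[RHS]addn1; congr (_ + _).
  apply: eq_in_count => r; rewrite mem_iota add0n => /andP[_ hr].
  have hout : inD w r (size w) = false by apply/negP => /inD_lt_size[_]; rewrite ltnn.
  by rewrite has_cat /= hout /= orbF.
rewrite ltnNge ncols_le_size andFb orbF (_ : has _ _ = false) //.
by apply/hasP => -[j _ /and3P[/inD_lt_size[]]]; rewrite ltnn.
Qed.

Definition add_col (g : nat -> nat -> bool) (c : nat -> bool) (r j : nat) : bool :=
  if j is j'.+1 then (if r is r'.+1 then g r' j' else false) else c r.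

Lemma valid_add_col w g c : valid w g ->
  (forall r, r < size w -> restricted (size w) w g r -> ~~ c r.+1) ->
  has c (iota 0 (size w).+1) -> (forall r, size w < r -> ~~ c r) ->
  valid (rcons w false) (add_col g c).
Proof.
case=> h1 h2 h3 h4 hr hc hout; split.
- move=> [|r] [|j] //=.
  + by rewrite inD_rcons_west_col0.
  + move=> hcr; rewrite inD_rcons_west_col0 leqNgt.
    by apply: contraL hcr => /hout.
  + by rewrite inD_rcons_westSS; apply: h1.
- move=> [|j]; rewrite ncols_rcons addn1 => hj.
    move/hasP: hc => [r hr' hcr]; exists r; rewrite inD_rcons_west_col0 /= hcr andbT.
    by move: hr'; rewrite mem_iota add0n ltnS.
  by have [r /andP[a b]] := h2 _ hj; exists r.+1; rewrite inD_rcons_westSS a.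
- move=> [|r] [|j] /=; first (by move=> _ _ []); first by rewrite inD_rcons_west_row0.
    by move=> _ _ _ [].
  rewrite inD_rcons_westSS => hin hg [[|r'] /and3P[hr' hin' hg']].
    by rewrite inD_rcons_west_row0 in hin'.
  rewrite inD_rcons_westSS /= ltnS in hin' hg' hr'.
  move=> [[|j'] /and3P[hj' hinj' hgj']] /=.
    have [hrn _] := inD_lt_size hin.
    by move/negP: (hr r hrn (restrictedI hin hg hr' hin' hg')).
  rewrite inD_rcons_westSS /= ltnS in hinj' hgj' hj'.
  apply: (h3 r j hin hg); first by exists r'; rewrite hr' hin' hg'.
  by exists j'; rewrite hj' hinj' hgj'.
- move=> [|r]; rewrite ncols_rcons addn1 ?ltnS /= => hrc hg; first by case.
  case=> [|j] /=; last exact: h4.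
  apply: hr; first exact: leq_trans hrc (ncols_le_size w).
  by apply/orP; right; rewrite hrc hg.
Qed.

Lemma valid_rcons_westE w g : valid (rcons w false) g ->
  [/\ valid w (fun r j => g r.+1 j.+1),
      (forall r, r < size w -> restricted (size w) w (fun r j => g r.+1 j.+1) r -> ~~ g r.+1 0),
      has (fun r => g r 0) (iota 0 (size w).+1)
    & g = add_col (fun r j => g r.+1 j.+1) (fun r => g r 0)].
Proof.
case=> h1 h2 h3 h4; split.
- split.
  + by move=> r j /h1; rewrite inD_rcons_westSS.
  + move=> j hj; have := h2 j.+1; rewrite ncols_rcons addn1 ltnS => /(_ hj).
    move=> [[|r] /andP[a b]]; first by rewrite inD_rcons_west_row0 in a.
    by exists r; rewrite -inD_rcons_westSS a.
  + move=> r j hin hg [r' /and3P[a b c]] [j' /and3P[d e f]].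
    apply: (h3 r.+1 j.+1); rewrite ?inD_rcons_westSS //.
      by exists r'.+1; rewrite ltnS a inD_rcons_westSS b c.
    by exists j'.+1; rewrite ltnS d inD_rcons_westSS e f.
  + by move=> r hr hg j; apply: (h4 r.+1) => //; rewrite ncols_rcons addn1 ltnS.
- move=> r hr /restrictedE [[j [r' [a b c d e]]]|[a b]].
    apply/negP => hg0; apply: (h3 r.+1 j.+1); rewrite ?inD_rcons_westSS //.
      by exists r'.+1; rewrite ltnS c inD_rcons_westSS d e.
    by exists 0; rewrite inD_rcons_west_col0 hr hg0.
  by apply: (h4 r.+1) => //; rewrite ncols_rcons addn1 ltnS.
- have := h2 0; rewrite ncols_rcons addn1 => /(_ isT) [r /andP[a b]].
  by apply/hasP; exists r => //; rewrite mem_iota add0n ltnS -inD_rcons_west_col0.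
- apply: functional_extensionality => r; apply: functional_extensionality => j.
  case: j => [|j] //; case: r => [|r] //=.
  by apply/negP => /h1; rewrite inD_rcons_west_row0.
Qed.

Lemma restricted_add_col w g c r : r < size w ->
  restricted (size w).+1 (rcons w false) (add_col g c) r.+1 =
  (~~ c r.+1 && has c (iota 0 r.+1)) || restricted (size w) w g r.
Proof.
move=> hr; rewrite [LHS]/restricted has_iota0S ncols_rcons addn1 ltnS.
rewrite inD_rcons_west_col0 hr.
have -> : has (fun r' => inD (rcons w false) r' 0 && add_col g c r' 0) (iota 0 r.+1) =
          has c (iota 0 r.+1).
  apply: eq_in_has => r'; rewrite mem_iota add0n ltnS => hr'.
  by rewrite inD_rcons_west_col0 (leq_trans hr' (ltnW hr)).
set B := has _ (iota 0 (size w)).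
have -> : B = has (fun j => [&& inD w r j, ~~ g r j
           & has (fun r' => inD w r' j && g r' j) (iota 0 r)]) (iota 0 (size w)).
  apply: eq_in_has => j _; rewrite inD_rcons_westSS has_iota0S inD_rcons_west_row0 /=.
  by congr [&& _, _ & _]; apply: eq_in_has => r' _; rewrite inD_rcons_westSS.
by rewrite /restricted !orbA.
Qed.

Lemma free_rows_add_col w g c : free_rows (size w).+1 (rcons w false) (add_col g c) =
  c 0 + count (fun r => ~~ restricted (size w) w g r && (c r.+1 || ~~ has c (iota 0 r.+1)))
              (iota 0 (size w)).
Proof.
rewrite /free_rows count_iota0S; congr (_ + _).
  rewrite /restricted ncols_rcons addn1 /= !andbF /= (_ : has _ _ = false) ?orFb ?negbK //.
  by apply/hasP => -[j _]; rewrite !andbF.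
apply: eq_in_count => r; rewrite mem_iota add0n => /andP[_ hr].
by rewrite restricted_add_col //; case: (c r.+1); case: has; case: restricted.
Qed.

(** * Summing over a new column *)

Lemma sum_reindex_inj (A B : finType) (PA : pred A) (PB : pred B) (h : A -> B)
    (F : B -> nat) :
  injective h -> (forall a, PA a -> PB (h a)) -> (forall b, PB b -> exists2 a, PA a & h a = b) ->
  \sum_(b | PB b) F b = \sum_(a | PA a) F (h a).
Proof.
move=> hi h1 h2.
have -> : \sum_(a | PA a) F (h a) = \sum_(a in [set a | PA a]) F (h a).
  by apply: eq_bigl => a; rewrite inE.
rewrite -(big_imset _ (in2W hi)) /=; apply: eq_bigl => b.
apply/idP/imsetP => [/h2[a ha <-]|[a]]; first by exists a; rewrite ?inE.
by rewrite inE => ha ->; apply: h1.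
Qed.

Definition col_fun m (col : {ffun 'I_m -> bool}) (r : nat) : bool :=
  if insub r is Some i then col i else false.

Lemma col_funE m col (i : 'I_m) : col_fun col i = col i.
Proof. by rewrite /col_fun valK. Qed.

Lemma col_fun_out m col r : m <= r -> @col_fun m col r = false.
Proof. by move=> h; rewrite /col_fun insubF // ltnNge h. Qed.

Lemma col_fun_inj m : injective (@col_fun m).
Proof. by move=> c1 c2 h; apply/ffunP => i; rewrite -!col_funE h. Qed.

Lemma col_fun_ofK m (c : nat -> bool) : (forall r, m <= r -> c r = false) ->
  col_fun [ffun i : 'I_m => c i] = c.
Proof.
move=> out; apply: functional_extensionality => r; case: (ltnP r m) => hr.
  by rewrite -[r]/(val (Ordinal hr)) col_funE ffunE.
by rewrite col_fun_out ?out.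
Qed.

Definition cons_col (b : bool) (c : nat -> bool) (r : nat) : bool :=
  if r is r'.+1 then c r' else b.

Lemma sum_col_cons m (F : (nat -> bool) -> nat) :
  \sum_(col : {ffun 'I_m.+1 -> bool}) F (col_fun col) =
  \sum_(b : bool) \sum_(col : {ffun 'I_m -> bool}) F (cons_col b (col_fun col)).
Proof.
pose h (p : bool * {ffun 'I_m -> bool}) := [ffun i : 'I_m.+1 => cons_col p.1 (col_fun p.2) i].
have col_h p : col_fun (h p) = cons_col p.1 (col_fun p.2).
  by apply: col_fun_ofK => -[|r] //= hr; rewrite col_fun_out.
rewrite (@sum_reindex_inj _ _ predT predT h (fun c => F (col_fun c))) //.
- by rewrite pair_big; apply: eq_big => [p|[b c] _] //; rewrite col_h.
- move=> p q /(congr1 (@col_fun m.+1)); rewrite !col_h => e.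
  have e0 := congr1 (fun f => f 0) e; have eS := congr1 (fun f r => f r.+1) e.
  by move: p q e0 eS {e} => [b c] [b' c'] /= -> /col_fun_inj ->.
move=> b _; exists (col_fun b 0, [ffun i : 'I_m => col_fun b i.+1]) => //.
apply: col_fun_inj; rewrite col_h; apply: functional_extensionality => -[|r] //=.
by rewrite (@col_fun_ofK m (fun r => col_fun b r.+1)) // => r' hr'; rewrite col_fun_out.
Qed.

Section NewColumn.
Variable t : nat.

Definition nfree m (rho : nat -> bool) : nat := count (fun r => ~~ rho r) (iota 0 m).

(* Weighted count of columns of height m avoiding the rows in rho, where a row
   outside rho scores a factor t when it holds a 1 or when no 1 lies above it;
   seen records that a 1 already occurred above the column. *)
Definition colsum m (rho : nat -> bool) (seen : bool) : nat :=
  \sum_(col : {ffun 'I_m -> bool})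
     (if all (fun r => rho r ==> ~~ col_fun col r) (iota 0 m)
      then t ^ count (fun r => ~~ rho r &&
                        (col_fun col r || ~~ (seen || has (col_fun col) (iota 0 r))))
                     (iota 0 m)
      else 0).

Lemma nfreeS m rho : nfree m.+1 rho = ~~ rho 0 + nfree m (fun r => rho r.+1).
Proof. exact: count_iota0S. Qed.

Lemma colsum0 rho seen : colsum 0 rho seen = 1.
Proof. by rewrite /colsum (eq_bigr (fun _ => 1)) // sum1_card card_ffun card_ord. Qed.

Lemma colsumS m rho seen : colsum m.+1 rho seen =
  \sum_(b : bool) (if rho 0 ==> ~~ b
                   then t ^ (~~ rho 0 && (b || ~~ seen))
                        * colsum m (fun r => rho r.+1) (seen || b)
                   else 0).
Proof.
rewrite /colsum (@sum_col_cons m (fun c => if all (fun r => rho r ==> ~~ c r) (iota 0 m.+1)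
      then t ^ count (fun r => ~~ rho r && (c r || ~~ (seen || has c (iota 0 r)))) (iota 0 m.+1)
      else 0)).
apply: eq_bigr => b _; case: ifP => hb; last by apply: big1 => c _; rewrite all_iota0S /= hb.
rewrite big_distrr; apply: eq_bigr => c _.
rewrite all_iota0S count_iota0S [X in X && _](_ : _ = true) // andTb.
case: ifP => _; last by rewrite /= muln0.
rewrite expnD; congr (_ * _); first by rewrite /= orbF.
by congr (_ ^ _); apply: eq_count => r; rewrite has_iota0S; case: seen; case: (b).
Qed.

(* Once a 1 has been seen, each free row independently scores t or 1. *)
Lemma colsum_seen m rho : colsum m rho true = (t + 1) ^ nfree m rho.
Proof.
elim: m rho => [|m IH] rho; first by rewrite colsum0.
rewrite colsumS big_bool /= !IH nfreeS.
by case: (rho 0) => /=; rewrite ?expn0 ?expn1 ?mul1n ?addn0 ?add0n ?expnS; lia.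
Qed.

Lemma colsum_unseen m rho :
  colsum m rho false + t ^ (nfree m rho).+1 = t * (t + 1) ^ nfree m rho + t ^ nfree m rho.
Proof.
elim: m rho => [|m IH] rho; first by rewrite colsum0 /nfree /= expn1 expn0; lia.
rewrite colsumS big_bool /= colsum_seen nfreeS.
have := IH (fun r => rho r.+1).
case: (rho 0) => /=; rewrite ?add0n ?add1n ?expn0 ?expn1 ?mul1n // !expnS.
by move: (colsum _ _ _) ((t + 1) ^ _) (t ^ _) => K P Q; nia.
Qed.

(* The empty column contributes t ^ nfree m rho to colsum m rho false. *)
Lemma colsum_nonzero m rho :
  \sum_(c : {ffun 'I_m -> bool})
     (if all (fun r => rho r ==> ~~ col_fun c r) (iota 0 m) && has (col_fun c) (iota 0 m)
      then t ^ count (fun r => ~~ rho r &&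
                        (col_fun c r || ~~ (false || has (col_fun c) (iota 0 r)))) (iota 0 m)
      else 0) + t ^ nfree m rho = colsum m rho false.
Proof.
pose X (c : {ffun 'I_m -> bool}) := t ^ count (fun r => ~~ rho r &&
   (col_fun c r || ~~ (false || has (col_fun c) (iota 0 r)))) (iota 0 m).
have -> : t ^ nfree m rho = \sum_(c : {ffun 'I_m -> bool})
     (if all (fun r => rho r ==> ~~ col_fun c r) (iota 0 m) && ~~ has (col_fun c) (iota 0 m)
      then X c else 0).
  have col0 : col_fun [ffun _ : 'I_m => false] = fun _ => false.
    by apply: col_fun_ofK.
  rewrite (bigD1 [ffun _ => false]) //= big1 ?addn0.
    rewrite /X col0 (_ : all _ _ = true); last by apply/allP => r _; rewrite implybT.
    by rewrite has_pred0 /=; congr (_ ^ _); apply: eq_count => r; rewrite has_pred0 andbT.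
  move=> c hc; case: ifP => // /andP[_ /negP []].
  have [i hi] : exists i, c i.
    apply/existsP; apply: contraR hc => /existsP hn; apply/eqP/ffunP => i.
    by rewrite ffunE; apply/negP => hci; apply: hn; exists i.
  by apply/hasP; exists (val i); rewrite ?col_funE // mem_iota ltn_ord.
rewrite -big_split /=; apply: eq_bigr => c _.
by rewrite /X; case: (all _ _); case: has; rewrite ?addn0.
Qed.

Lemma new_column_sum m rho :
  \sum_(col : {ffun 'I_m.+1 -> bool} | all (fun r => rho r ==> ~~ col_fun col r.+1) (iota 0 m)
                                        && has (col_fun col) (iota 0 m.+1))
     t ^ (col_fun col 0 + count (fun r => ~~ rho r &&
            (col_fun col r.+1 || ~~ has (col_fun col) (iota 0 r.+1))) (iota 0 m))
  + t ^ (nfree m rho).+1 = 2 * t * (t + 1) ^ nfree m rho.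
Proof.
rewrite big_mkcond (@sum_col_cons m (fun c =>
  if all (fun r => rho r ==> ~~ c r.+1) (iota 0 m) && has c (iota 0 m.+1)
  then t ^ (c 0 + count (fun r => ~~ rho r && (c r.+1 || ~~ has c (iota 0 r.+1))) (iota 0 m))
  else 0)) big_bool.
set top1 := \sum_(c : {ffun 'I_m -> bool}) _.
set top0 := \sum_(c : {ffun 'I_m -> bool}) _.
have -> : top1 = t * colsum m rho true.
  rewrite /top1 /colsum big_distrr; apply: eq_bigr => c _.
  rewrite has_iota0S orTb andbT; case: ifP => _; last by rewrite /= muln0.
  by rewrite expnD expn1.
have -> : top0 = colsum m rho false - t ^ nfree m rho.
  rewrite -colsum_nonzero addnK; apply: eq_bigr => c _; rewrite has_iota0S orFb.
  by case: ifP => // _; rewrite add0n; congr (_ ^ _); apply: eq_count => r; rewrite has_iota0S.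
have := colsum_unseen m rho; have := colsum_nonzero m rho.
rewrite colsum_seen !expnS; move: (\sum_(c : {ffun 'I_m -> bool}) _) (colsum _ _ _).
by move=> A K h1 h2 /=; nia.
Qed.

End NewColumn.

(** * The generating function of fillings by free rows *)

Definition gen n (w : seq bool) (t : nat) : nat :=
  \sum_(f : {ffun 'I_n * 'I_n -> bool} | typeB_filling w f) t ^ free_rows n w (cell f).

Lemma gen_nil t : gen 0 [::] t = 1.
Proof.
rewrite /gen /free_rows /= (eq_bigr (fun _ => 1)) // (eq_bigl predT).
  by rewrite sum1_card card_ffun card_prod card_ord.
by move=> f; apply/and4P; split; apply/forallP => -[].
Qed.

(* G_{wS}(t) = t G_w(t): the fillings are the same, with one more free row. *)
Lemma gen_rcons_south w t : gen (size w).+1 (rcons w true) t = t * gen (size w) w t.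
Proof.
have ext f : cell (filling_of (size w).+1 (@cell (size w) f)) = cell f.
  by apply: cell_filling_ofK => r j /cell_supp[hr hj]; split; apply: ltnW.
rewrite /gen (@sum_reindex_inj _ _
   (fun f : {ffun 'I_(size w) * 'I_(size w) -> bool} => typeB_filling w f)
   (fun f => typeB_filling (rcons w true) f) (fun f => filling_of (size w).+1 (cell f))).
- rewrite big_distrr; apply: eq_bigr => f _; by rewrite ext free_rows_rcons_south expnS.
- by move=> f g /(congr1 (@cell (size w).+1)); rewrite !ext => /cell_inj.
- move=> f /typeB_fillingP hv; apply/typeB_fillingP; first exact: size_rcons.
  by rewrite ext; apply/valid_rcons_south; apply: hv.
move=> f /(typeB_fillingP _ (size_rcons _ _)) /valid_rcons_south hv.
have supp : cell (filling_of (size w) (cell f)) = cell f.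
  by apply: cell_filling_ofK => r j /(valid_inD hv) /inD_lt_size.
exists (filling_of (size w) (cell f)); first by apply/typeB_fillingP; rewrite ?supp.
by apply: cell_inj; rewrite ext supp.
Qed.

Section WestStep.
Variable w : seq bool.
Local Notation n := (size w).

Definition admissible (g : nat -> nat -> bool) (c : nat -> bool) : bool :=
  all (fun r => restricted n w g r ==> ~~ c r.+1) (iota 0 n) && has c (iota 0 n.+1).

Definition west_ext (p : {ffun 'I_n * 'I_n -> bool} * {ffun 'I_n.+1 -> bool}) :
    {ffun 'I_n.+1 * 'I_n.+1 -> bool} :=
  filling_of n.+1 (add_col (cell p.1) (col_fun p.2)).

Lemma cell_west_ext p : cell (west_ext p) = add_col (cell p.1) (col_fun p.2).
Proof.
apply: cell_filling_ofK => -[|r] [|j] //=.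
- by move=> h; split => //; apply: contraTltn h => /col_fun_out ->.
- by move=> /cell_supp[hr hj]; rewrite !ltnS.
Qed.

Lemma west_ext_inj : injective west_ext.
Proof.
move=> [f c] [f' c'] /(congr1 (@cell n.+1)); rewrite !cell_west_ext /= => e.
have e1 : cell f = cell f'.
  do 2 apply: functional_extensionality => ?; exact: (congr1 (fun F => F _.+1 _.+1) e).
have e2 : col_fun c = col_fun c'.
  by apply: functional_extensionality => r; exact: (congr1 (fun F => F r 0) e).
by rewrite (cell_inj e1) (col_fun_inj e2).
Qed.

Lemma west_ext_onto (f : {ffun 'I_n.+1 * 'I_n.+1 -> bool}) :
  typeB_filling (rcons w false) f ->
  exists2 p, typeB_filling w p.1 && admissible (cell p.1) (col_fun p.2) & west_ext p = f.
Proof.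
move=> /(typeB_fillingP _ (size_rcons _ _)) /valid_rcons_westE [hv hres hhas heq].
have e1 : cell (filling_of n (fun r j => cell f r.+1 j.+1)) = (fun r j => cell f r.+1 j.+1).
  by apply: cell_filling_ofK => r j /(valid_inD hv) /inD_lt_size.
have e2 : col_fun [ffun i : 'I_n.+1 => cell f i 0] = (fun r => cell f r 0).
  apply: (@col_fun_ofK n.+1 (fun r => cell f r 0)) => r hr.
  by rewrite cell_out // negb_and -leqNgt hr.
exists (filling_of n (fun r j => cell f r.+1 j.+1), [ffun i : 'I_n.+1 => cell f i 0]).
  rewrite /= /admissible e1 e2 hhas andbT; apply/andP; split.
    by apply/typeB_fillingP; rewrite ?e1.
  by apply/allP => r; rewrite mem_iota add0n => /andP[_ hr]; apply/implyP; apply: hres.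
by apply: cell_inj; rewrite cell_west_ext /= e1 e2 -heq.
Qed.

Lemma west_ext_typeB p : typeB_filling w p.1 && admissible (cell p.1) (col_fun p.2) ->
  typeB_filling (rcons w false) (west_ext p).
Proof.
case: p => f c /= /andP[/(typeB_fillingP f (erefl _)) hv /andP[ha hh]].
apply/(typeB_fillingP _ (size_rcons _ _)); rewrite cell_west_ext /=.
apply: valid_add_col => //; last by move=> r hr; rewrite col_fun_out.
by move=> r hr; move/allP: ha => /(_ r); rewrite mem_iota add0n hr => /(_ isT) /implyP.
Qed.

(* G_{wW}(t) + t G_w(t) = 2t G_w(t+1): sum over the new column with the
   column identity new_column_sum, the free rows of g playing the role of rho. *)
Lemma gen_rcons_west t : gen n.+1 (rcons w false) t + t * gen n w t = 2 * t * gen n w t.+1.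
Proof.
rewrite /gen (sum_reindex_inj _ west_ext_inj west_ext_typeB west_ext_onto).
rewrite [X in X + _](_ : _ = \sum_(f | typeB_filling w f) \sum_(c | admissible (cell f) (col_fun c))
    t ^ free_rows n.+1 (rcons w false) (cell (west_ext (f, c)))); last first.
  by rewrite pair_big_dep; apply: eq_bigr => -[f c].
rewrite big_distrr -big_split big_distrr; apply: eq_bigr => f _ /=.
have -> : free_rows n w (cell f) = nfree n (restricted n w (cell f)) by [].
rewrite -[t.+1]addn1 -new_column_sum expnS; congr (_ + _).
by apply: eq_bigr => c _; rewrite cell_west_ext free_rows_add_col.
Qed.

End WestStep.

(** * Summing over boundary words *)

Fixpoint words (n : nat) : seq (seq bool) :=
  if n is n'.+1 then [seq rcons s b | s <- words n', b <- [:: true; false]] else [:: [::]].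

Lemma mem_words n s : (s \in words n) = (size s == n).
Proof.
elim: n s => [|n IH] s; first by case: s.
apply/allpairsP/idP => [[[s' b] [hs hb ->]]|]; first by move: hs; rewrite /= IH size_rcons eqSS.
case/lastP: s => [//|s' b]; rewrite size_rcons eqSS => hs.
by exists (s', b); rewrite /= IH hs; case: b.
Qed.

Lemma uniq_words n : uniq (words n).
Proof.
elim: n => [//|n IH]; apply: allpairs_uniq => //.
by move=> [s b] [s' b'] _ _ /= /rcons_inj.
Qed.

Lemma sum_tuples n (F : seq bool -> nat) :
  \sum_(w : n.-tuple bool) F (tval w) = \sum_(s <- words n) F s.
Proof.
rewrite -big_enum -(big_map val predT F); apply/perm_big/uniq_perm.
- by rewrite map_inj_uniq ?enum_uniq //; apply: val_inj.
- exact: uniq_words.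
move=> s; rewrite mem_words; apply/mapP/idP => [[w _ ->]|hs]; first by rewrite size_tuple.
by exists (Tuple hs); rewrite ?mem_enum.
Qed.

Lemma sum_wordsS n (F : seq bool -> nat) :
  \sum_(s <- words n.+1) F s = \sum_(s <- words n) (F (rcons s true) + F (rcons s false)).
Proof.
rewrite big_allpairs_dep; apply: eq_bigr => s _.
by rewrite !big_cons big_nil /= addn0.
Qed.

Definition rising (t n : nat) : nat := \prod_(i < n) (t + i).

Lemma rising0 t : rising t 0 = 1.
Proof. exact: big_ord0. Qed.

Lemma risingS t n : rising t n.+1 = t * rising t.+1 n.
Proof.
rewrite /rising big_ord_recl addn0; congr (_ * _); apply: eq_bigr => i _.
by rewrite lift0 addSnnS.
Qed.

Lemma risingSr t n : rising t n.+1 = rising t n * (t + n).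
Proof. exact: big_ord_recr. Qed.

Lemma rising_add t a b : rising t (a + b) = rising t a * rising (t + a) b.
Proof.
elim: b => [|b IH]; first by rewrite addn0 rising0 muln1.
by rewrite addnS !risingSr IH addnA mulnA.
Qed.

Lemma rising1 n : rising 1 n = n`!.
Proof. by elim: n => [|n IH]; rewrite ?rising0 // risingSr IH factS add1n mulnC. Qed.

Lemma sum_gen n t : \sum_(s <- words n) gen n s t = 2 ^ n * rising t n.
Proof.
elim: n t => [|n IH] t; first by rewrite big_cons big_nil gen_nil rising0.
rewrite sum_wordsS big_seq (eq_bigr (fun s => 2 * t * gen n s t.+1)); last first.
  by move=> s; rewrite mem_words => /eqP <-; rewrite gen_rcons_south -gen_rcons_west addnC.
by rewrite -big_seq -big_distrr IH risingS expnS; move: (2 ^ n) (rising t.+1 n) => a b /=; nia.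
Qed.

Lemma card_typeB n : #|typeB n| = 2 ^ n * n`!.
Proof.
rewrite -rising1 -sum_gen -sum1_card.
rewrite (eq_bigl (fun t : cand n => true && typeB_filling (tval t.1) t.2)); last first.
  by move=> t; rewrite inE.
rewrite -(pair_big_dep xpredT (fun (w : n.-tuple bool) f => typeB_filling (tval w) f)
  (fun _ _ => 1)).
rewrite -(sum_tuples n (fun s => gen n s 1)); apply: eq_bigr => w _.
by apply: eq_bigr => f _; rewrite exp1n.
Qed.

Lemma sum_gen_west d t :
  \sum_(s <- words d) gen d.+1 (rcons s false) t = 2 ^ d * rising t d * (t + 2 * d).
Proof.
have shift : t * rising t.+1 d = rising t d * (t + d) by rewrite -risingS risingSr.
have rec : \sum_(s <- words d) gen d.+1 (rcons s false) t + t * (2 ^ d * rising t d) =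
           2 * t * (2 ^ d * rising t.+1 d).
  rewrite -!sum_gen !big_distrr -big_split /=; apply: eq_big_seq => s.
  by rewrite mem_words => /eqP <-; apply: gen_rcons_west.
move: rec shift; move: (\sum_(s <- words d) _) (2 ^ d) (rising t d) (rising t.+1 d).
by move=> Y P A B /=; nia.
Qed.

Lemma sum_gen_west_west d t :
  \sum_(s <- words d) gen d.+2 (rcons (rcons s false) false) t =
  2 ^ d * rising t d * (t ^ 2 + 2 * (t + d) * (2 * d + 1)).
Proof.
have shift : t * rising t.+1 d = rising t d * (t + d) by rewrite -risingS risingSr.
have rec : \sum_(s <- words d) gen d.+2 (rcons (rcons s false) false) t
           + t * \sum_(s <- words d) gen d.+1 (rcons s false) t =
           2 * t * \sum_(s <- words d) gen d.+1 (rcons s false) t.+1.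
  rewrite !big_distrr -big_split /=; apply: eq_big_seq => s; rewrite mem_words => /eqP hs.
  by have := gen_rcons_west (rcons s false) t; rewrite size_rcons hs.
move: rec shift; rewrite !sum_gen_west.
move: (\sum_(s <- words d) _) (2 ^ d) (rising t d) (rising t.+1 d).
move=> H P A B /= rec shift.
have := congr1 (muln (2 * P * (t.+1 + 2 * d))) shift; nia.
Qed.

(** * Tableaux with west steps at positions k-1 and k *)

Definition gen_WW n d t : nat :=
  \sum_(s <- words n | ~~ nth false s d && ~~ nth false s d.+1) gen n s t.

(* Steps after position d+1 are unconstrained, so they obey the plain recursion. *)
Lemma gen_WW_step m d t : gen_WW (d.+2 + m).+1 d t = 2 * t * gen_WW (d.+2 + m) d t.+1.
Proof.
rewrite /gen_WW (big_mkcond _ (fun s => gen _ s t)) (big_mkcond _ (fun s => gen _ s t.+1)).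
rewrite sum_wordsS.
rewrite big_distrr !big_seq; apply: eq_bigr => s.
rewrite mem_words => /eqP hs; rewrite !nth_rcons hs !ltn_addr //.
case: ifP => _; last by rewrite /= muln0.
by rewrite /= -hs gen_rcons_south -gen_rcons_west addnC.
Qed.

Lemma gen_WW_shift m d t : gen_WW (d.+2 + m) d t = 2 ^ m * rising t m * gen_WW d.+2 d (t + m).
Proof.
elim: m t => [|m IH] t; first by rewrite !addn0 rising0 mul1n.
rewrite addnS gen_WW_step IH risingS expnS addSnnS.
by move: (2 ^ m) (rising t.+1 m) (gen_WW _ _ _) => a b c /=; nia.
Qed.

Lemma gen_WW_base d t :
  gen_WW d.+2 d t = \sum_(s <- words d) gen d.+2 (rcons (rcons s false) false) t.
Proof.
rewrite /gen_WW big_mkcond sum_wordsS.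
transitivity (\sum_(s <- words d.+1) (if ~~ nth false s d then gen d.+2 (rcons s false) t else 0)).
  rewrite !big_seq; apply: eq_bigr => s; rewrite mem_words => /eqP hs.
  by rewrite !nth_rcons hs ltnSn eqxx ltnn /=; case: (nth false s d).
rewrite sum_wordsS !big_seq; apply: eq_bigr => s; rewrite mem_words => /eqP hs.
by rewrite !nth_rcons hs ltnn eqxx.
Qed.

Lemma card_WW n d : #|W n d.+2 :&: W n d.+1 :&: typeB n| = gen_WW n d 1.
Proof.
rewrite -sum1_card (eq_bigl (fun t : cand n =>
   (~~ nth false (tval t.1) d && ~~ nth false (tval t.1) d.+1) && typeB_filling (tval t.1) t.2));
  last by move=> t; rewrite !inE is_typeB_filling /= [~~ _ && ~~ _]andbC.
rewrite -(pair_big_dep (fun w : n.-tuple bool => ~~ nth false w d && ~~ nth false w d.+1)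
   (fun (w : n.-tuple bool) f => typeB_filling (tval w) f) (fun _ _ => 1)).
rewrite /gen_WW [RHS]big_mkcond -(sum_tuples n (fun s =>
   if ~~ nth false s d && ~~ nth false s d.+1 then gen n s 1 else 0)) big_mkcond.
apply: eq_bigr => w _; case: ifP => // _.
by apply: eq_bigr => f _; rewrite exp1n.
Qed.

(* With n = k + m and k = d + 2: the number of tableaux with W at k-1 and k
   is 2^(n-2) (n-2)! ((n-k+1)^2 + 2(n-1)(2k-3)). *)
Lemma card_WW_closed d m :
  #|W (d.+2 + m) d.+2 :&: W (d.+2 + m) d.+1 :&: typeB (d.+2 + m)| =
  2 ^ (d + m) * (d + m)`! * ((m + 1) ^ 2 + 2 * (m + 1 + d) * (2 * d + 1)).
Proof.
rewrite card_WW gen_WW_shift gen_WW_base sum_gen_west_west add1n addnC.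
rewrite -rising1 [in RHS]addnC rising_add expnD add1n.
by move: (2 ^ d) (2 ^ m) (rising 1 m) (rising m.+1 d) => a b c e /=; nia.
Qed.

(* |B_n| = 2^n n! written with the factor 2^(n-2) (n-2)! of card_WW_closed. *)
Lemma card_typeB_split d m :
  #|typeB (d.+2 + m)| = 4 * (2 ^ (d + m) * (d + m)`!) * (m + 1 + d) * (m + 2 + d).
Proof.
rewrite card_typeB !addSn !factS !expnS.
by move: (2 ^ _) (_`!) => a b; rewrite /=; lia.
Qed.

Local Open Scope ring_scope.

Theorem mainTheorem10 (n k : nat) :
  (2 <= k)%N -> (k <= n)%N ->
  Pn (W n k :&: W n k.-1) =
    k%:R / n%:R - 3%:R / (2 * n)%:R
    + ((n - k + 1) ^ 2)%:R / (4 * n * (n - 1))%:R :> rat.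
Proof.
case: k => [|[|d]] // _ hkn.
have [m ->] : exists m, n = (d.+2 + m)%N by exists (n - d.+2)%N; rewrite subnKC.
rewrite /Pn card_WW_closed card_typeB_split addKn.
have -> : (d.+2 + m - 1 = m + 1 + d)%N by lia.
have h1 : (m + 1 + d)%:R != 0 :> rat by rewrite pnatr_eq0 addn1.
have h2 : (2 + d + m)%:R != 0 :> rat by rewrite pnatr_eq0 -addnA add2n.
have h3 : (d + m)`!%:R != 0 :> rat by rewrite pnatr_eq0 -lt0n fact_gt0.
have h4 : (2 ^ (d + m))%:R != 0 :> rat by rewrite pnatr_eq0 -lt0n expn_gt0.
move: h1 h2 h3 h4; rewrite !(natrM, natrD, natrX) => h1 h2 h3 h4.
by field; rewrite h1 h2 h3 h4.
Qed.
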